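(* Let $F$ be a continuous distribution function with $F(0)=0$ and density $f:[0,\infty)\to[0,\infty)$, such that there are constants $c>0$, $\tau>3$ with $1-F(x)\le cx^{1-\tau}$ for all $x\ge0$. Assume further that there exists $a>0$ such that, as $y\downarrow0$, $$\int_y^1\frac{\bar F^{-1}(u)}{\underline f(\bar F^{-1}(u))}\,du=O(y^{-a}),$$ where $\underline f(x)=\inf_{0\le y\le x}f(y)$. For $u\in(0,1)$ let $u_N=\lceil uN\rceil/N$. Then there exists $\alpha>0$ such that $$\int_0^1\bar F^{-1}(u)\big(\bar F^{-1}(u)-\bar F^{-1}(u_N)\big)\,du=O(N^{-\alpha}),$$ and, for $i=1,2$, $$\int_0^1\big(\bar F^{-1}(u)^i-\bar F^{-1}(u_N)^i\big)\,du=O(N^{-\alpha}).$$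
   Context: $\bar F(x)=1-F(x)$ and, for $u\in(0,1)$, $\bar F^{-1}(u)=\inf\{s:\bar F(s)\le u\}$ (so $\bar F^{-1}$ is non-increasing and $\bar F^{-1}(U)$ has distribution $F$ for $U$ uniform on $(0,1)$). *)

From HB Require Import structures.
From mathcomp Require Import all_boot all_order all_algebra.
From mathcomp Require Import all_classical all_reals all_analysis.
Set Implicit Arguments. Unset Strict Implicit. Unset Printing Implicit Defensive.
Import Order.TTheory GRing.Theory Num.Theory.
Import numFieldNormedType.Exports.
Local Open Scope classical_set_scope.
Local Open Scope ring_scope.

(* Generalized inverse of the survival function Fbar = 1 - F,
   Fbar^{-1}(u) = inf {s : Fbar s <= u}; the infimum is taken over s >= 0,
   which does not change the value for u in (0,1) (there F s = 0 for s <= 0),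
   and gives the natural value Fbar^{-1}(1) = 0 for a distribution on [0,oo). *)
Definition Fbar_inv (R : realType) (F : R -> R) (u : R) : R :=
  inf [set s : R | 0 <= s /\ 1 - F s <= u].

Definition f_low (R : realType) (f : R -> R) (x : R) : R :=
  inf [set f y | y in `[0, x]%classic].

Definition uN (R : realType) (N : nat) (u : R) : R :=
  (Num.ceil (u * N%:R))%:~R / N%:R.

(* It gives Fbar^{-1}(u) <= (c/u)^p with
   p = 1/(tau - 1), so H = (Fbar^{-1})^2 + Fbar^{-1} is nonincreasing on (0,1]
   with H(u) <= K u^{-b}, b = 2p < 1, and each of the three integrands lies
   between 0 and H(u) - H(u_N).  On a grid cell ((k-1)/N, k/N] with k >= 2 the
   rounding error H(u) - H(u_N) is at most H((k-1)/N) - H(k/N), so these cells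
   telescope to at most H(1/N)/N <= K N^{b-1}.  On the first cell the error is
   at most H, whose integral over (0, 1/N] is O(N^{b-1}) by splitting (0, 1/N]
   into dyadic pieces.  Hence alpha = 1 - b works. *)

From HB Require Import structures.
From mathcomp Require Import all_boot all_order all_algebra.
From mathcomp Require Import all_classical all_reals all_analysis.
From mathcomp Require Import ring lra measurable_realfun.
Set Implicit Arguments. Unset Strict Implicit. Unset Printing Implicit Defensive.
Import Order.TTheory GRing.Theory Num.Theory.
Import numFieldNormedType.Exports.
Local Open Scope classical_set_scope.
Local Open Scope ring_scope.

Section ge0_le_integral_subset.
Context d (T : measurableType d) (R : realType) (mu : {measure set T -> \bar R}).
Local Open Scope ereal_scope.

(* No measurability is needed: both sides are suprema over simple functions. *)
Lemma ge0_le_integral_subset (D D' : set T) (f g : T -> \bar R) :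
  D `<=` D' -> (forall x, D x -> 0 <= f x) -> (forall x, D' x -> 0 <= g x) ->
  (forall x, D x -> f x <= g x) ->
  \int[mu]_(x in D) f x <= \int[mu]_(x in D') g x.
Proof.
move=> DD' f0 g0 fg; rewrite (ge0_integralE mu f0) (ge0_integralE mu g0).
apply: le_ereal_sup => _ /= [h hf <-]; exists h => //= x.
apply: le_trans (hf x) _; rewrite /patch.
case: ifPn => [/set_mem Dx|_]; first by rewrite mem_set ?fg //; exact: DD'.
by case: ifPn => // /set_mem /g0.
Qed.

End ge0_le_integral_subset.

Section grid_rounding.
Context (R : realType) (N : nat) (N_gt0 : (0 < N)%N).

Let N_gt0' : 0 < N%:R :> R. Proof. by rewrite ltr0n. Qed.

Lemma uN_ge (u : R) : u <= uN N u.
Proof. by rewrite /uN ler_pdivlMr// ceil_ge. Qed.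

Lemma uN_le1 (u : R) : u <= 1 -> uN N u <= 1.
Proof.
move=> u1; rewrite /uN ler_pdivrMr// mul1r -[N%:R]/(N%:Z%:~R) ler_int.
by rewrite ceil_le_int -[leRHS]mul1r ler_pM2r.
Qed.

Lemma le_uN : {homo @uN R N : u v / u <= v}.
Proof. by move=> u v uv; rewrite /uN ler_pM2r ?invr_gt0// ler_int le_ceil// ler_pM2r. Qed.

Lemma uN_cell (m : nat) (u : R) : m%:R / N%:R < u <= m.+1%:R / N%:R ->
  uN N u = m.+1%:R / N%:R.
Proof.
move=> /andP[mu um]; rewrite /uN (@ceil_def _ _ m.+1%:Z) //; apply/andP; split.
  by rewrite -ltr_pdivrMr // -addn1 PoszD addrK.
by rewrite -ler_pdivlMr.
Qed.

Lemma uN_itv01 (u : R) : u \in `]0, 1] -> uN N u \in `]0, 1].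
Proof.
rewrite !in_itv /= => /andP[u0 u1].
by rewrite (lt_le_trans u0 (uN_ge u)) uN_le1.
Qed.

End grid_rounding.

Section nonincreasing_measurable.
Context (R : realType).

Lemma nonincreasing_measurable_itv (a b : R) (phi : R -> R) : a <= b ->
  {in `[a, b] &, {homo phi : x y /~ x <= y}} -> measurable_fun `[a, b] phi.
Proof.
move=> ab phi_ni; pose clamp x := Order.max a (Order.min x b).
have clamp_itv x : clamp x \in `[a, b].
  by rewrite in_itv /= le_max lexx ge_max ab ge_min lexx orbT.
apply: (eq_measurable_fun (phi \o clamp)) => [x|].
  rewrite inE /= in_itv /= => /andP[ax xb].
  by rewrite /= /clamp (min_l xb) (max_r ax).
apply: nonincreasing_measurable => // x y xy /=.
by apply: phi_ni => //; apply: le_max2 => //; exact: le_min2.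
Qed.

Lemma nonincreasing_measurable_itv01 (phi : R -> R) :
  {in `]0, 1] &, {homo phi : x y /~ x <= y}} ->
  measurable_fun (`]0, 1] : set R) phi.
Proof.
move=> phi_ni; pose E n : set R := `[n.+1%:R^-1, 1]%classic.
have E01 n : E n `<=` `]0, 1].
  by move=> x; rewrite /E /= !in_itv /= => /andP[+ ->]; rewrite andbT; apply: lt_le_trans.
have -> : `]0, 1]%classic = \bigcup_n E n :> set R.
  apply/seteqP; split=> [x|x [n _ /E01] //].
  rewrite /= in_itv /= => /andP[x0 x1]; exists (Num.truncn x^-1) => //.
  rewrite /E /= in_itv /= x1 andbT invf_ple ?posrE ?ltr0n//.
  exact: ltW (truncnS_gt _).
apply/measurable_fun_bigcup => [n|n]; first exact: measurable_itv.
apply: nonincreasing_measurable_itv; first by rewrite invf_le1 ?ler1n ?ltr0n.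
by move=> x y /E01 x01 /E01 y01; apply: phi_ni.
Qed.

End nonincreasing_measurable.

Lemma powR_exprn (R : realType) (x r : R) (n : nat) :
  0 <= x -> (x ^+ n) `^ r = (x `^ r) ^+ n.
Proof.
by move=> x0; rewrite -powR_mulrn // -powRrM mulrC powRrM powR_mulrn ?powR_ge0.
Qed.

Lemma powRN_mulr (R : realType) (x r : R) : 0 < x -> x `^ (- r) * x = x `^ (1 - r).
Proof.
move=> x0; rewrite -{2}(powRr1 (ltW x0)) -powRD; last by rewrite (gt_eqF x0) implybT.
by rewrite addrC.
Qed.

Section dyadic_decomposition.
Context (R : realType) (d : R) (d_gt0 : 0 < d).

Definition dyadic_itv (j : nat) : set R := `]d / 2 ^+ j.+1, d / 2 ^+ j]%classic.

Let dyadic_gt0 j : 0 < d / 2 ^+ j.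
Proof. by rewrite divr_gt0 // exprn_gt0. Qed.

Let dyadic_le m n : (m <= n)%N -> d / 2 ^+ n <= d / 2 ^+ m.
Proof.
move=> mn; rewrite ler_pM2l // lef_pV2 ?posrE ?exprn_gt0 //.
by rewrite ler_eXn2l // ltr1n.
Qed.

Lemma bigcup_dyadic_itv : \bigcup_j dyadic_itv j = `]0, d]%classic.
Proof.
apply/seteqP; split=> [u [j _]|u].
  rewrite /dyadic_itv /= !in_itv /= => /andP[+ ud].
  move=> /(lt_trans (dyadic_gt0 _)) -> /=; apply: le_trans ud _.
  by have := dyadic_le (leq0n j); rewrite expr0 divr1.
rewrite /= in_itv /= => /andP[u0 ud].
have ex_small : exists n, d / 2 ^+ n.+1 < u.
  exists (Num.truncn (d / u)); set n := Num.truncn _.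
  rewrite ltr_pdivrMr ?exprn_gt0 // -ltr_pdivrMl //.
  apply: lt_le_trans (truncnS_gt _) _.
  by rewrite mulrC -natrX ler_nat ltnW // ltn_expl.
have [j dj_u j_min] := ex_minnP ex_small.
exists j => //; rewrite /dyadic_itv /= in_itv /= dj_u /=.
case: j dj_u j_min => [|j] _ j_min; first by rewrite divr1.
by rewrite leNgt; apply/negP => /j_min; rewrite ltnn.
Qed.

Lemma dyadic_itv_sub j : dyadic_itv j `<=` `]0, d]%classic.
Proof. by rewrite -bigcup_dyadic_itv => u Au; exists j. Qed.

Lemma trivIset_dyadic_itv : trivIset setT dyadic_itv.
Proof.
move=> i j _ _ [u []]; rewrite /dyadic_itv /= !in_itv /= => /andP[iu ui] /andP[ju uj].
have [ij|ji|//] := ltngtP i j.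
  by have := le_lt_trans (le_trans uj (dyadic_le ij)) iu; rewrite ltxx.
by have := le_lt_trans (le_trans ui (dyadic_le ji)) ju; rewrite ltxx.
Qed.

Lemma lebesgue_measure_dyadic_itv j :
  lebesgue_measure (dyadic_itv j) = (d / 2 ^+ j.+1)%:E.
Proof.
have lt_j : d / 2 ^+ j.+1 < d / 2 ^+ j.
  by rewrite ltr_pM2l // ltf_pV2 ?posrE ?exprn_gt0 // ltr_eXn2l // ltr1n.
rewrite lebesgue_measure_itv /= lte_fin lt_j -EFinB; congr EFin.
by rewrite exprS invfM; field.
Qed.

End dyadic_decomposition.

Section rounding_error.
Context (R : realType) (H : R -> R).
Hypothesis H_ni : {in `]0, 1] &, {homo H : x y /~ x <= y}}.
Hypothesis H_ge0 : {in `]0, 1], forall u, 0 <= H u}.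
Local Notation mu := (@lebesgue_measure R).

Lemma sub_uN_ge0 N u : (0 < N)%N -> u \in `]0, 1] -> 0 <= H u - H (uN N u).
Proof. by move=> N0 u01; rewrite subr_ge0 H_ni ?uN_itv01 ?uN_ge. Qed.

Lemma measurable_sub_uN N : (0 < N)%N ->
  measurable_fun (`]0, 1]%classic : set R) (fun u => H u - H (uN N u)).
Proof.
move=> N0; apply: measurable_funB; first exact: nonincreasing_measurable_itv01.
apply: nonincreasing_measurable_itv01 => u v u01 v01 uv.
by apply: H_ni; rewrite ?uN_itv01 ?le_uN.
Qed.

Section grid.
Variables (N : nat) (N_gt0 : (0 < N)%N).

Local Notation t k := (k%:R / N%:R : R).

Let N_gt0' : 0 < N%:R :> R. Proof. by rewrite ltr0n. Qed.

Let t_itv01 k : (0 < k <= N)%N -> t k \in `]0, 1].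
Proof.
by move=> /andP[k0 kN]; rewrite in_itv /= divr_gt0 ?ltr0n // ler_pdivrMr // mul1r ler_nat.
Qed.

Let t_lt k : t k < t k.+1.
Proof. by rewrite ltr_pM2r ?invr_gt0 // ltr_nat. Qed.

Let sub_itv01 k : (0 < k <= N)%N -> `]0, t k]%classic `<=` (`]0, 1]%classic : set R).
Proof.
move=> /t_itv01; rewrite in_itv /= => /andP[_ tk1] u.
by rewrite /= !in_itv /= => /andP[-> /le_trans]; apply.
Qed.

Lemma integral_first_cell :
  (\int[mu]_(u in `]0%R, t 1]%classic) (H u - H (uN N u))%:E <=
   \int[mu]_(u in `]0%R, t 1]%classic) (H u)%:E)%E.
Proof.
have sub01 := @sub_itv01 1 N_gt0.
apply: ge0_le_integral_subset => // u /sub01 u01; rewrite lee_fin.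
- exact: sub_uN_ge0.
- exact: H_ge0.
- by rewrite lerBlDr lerDl H_ge0 ?uN_itv01.
Qed.

Lemma integral_cell k : (0 < k)%N -> (k < N)%N ->
  (\int[mu]_(u in `]t k, t k.+1]%classic) (H u - H (uN N u))%:E <=
   ((H (t k) - H (t k.+1)) / N%:R)%:E)%E.
Proof.
move=> k0 kN; have tk01 : t k \in `]0, 1] by rewrite t_itv01 // k0 ltnW.
have tk1_01 : t k.+1 \in `]0, 1] by rewrite t_itv01.
have cell01 u : u \in `]t k, t k.+1] -> u \in `]0, 1].
  move: tk01 tk1_01; rewrite !in_itv /= => /andP[tk0 _] /andP[_ tk1] /andP[tku ut].
  by rewrite (lt_trans tk0 tku) (le_trans ut tk1).
apply: le_trans
  (_ : _ <= \int[mu]_(u in `]t k, t k.+1]%classic) cst (H (t k) - H (t k.+1))%:E u)%E _.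
  apply: ge0_le_integral_subset => // u /= uk; rewrite lee_fin.
  - exact/sub_uN_ge0/cell01.
  - by rewrite subr_ge0 H_ni // ltW.
  - rewrite (uN_cell N_gt0 uk) lerD2r; apply: H_ni => //; first exact: cell01.
    by move: uk; rewrite in_itv /= => /andP[/ltW].
rewrite integral_cst /= ?lebesgue_measure_itv /= ?lte_fin ?t_lt; last exact: measurable_itv.
by rewrite -EFinB -EFinM lee_fin -mulrBl -natrB // subSnn mul1r.
Qed.

Lemma integral_sub_uN_telescope k : (k < N)%N ->
  (\int[mu]_(u in `]0%R, t k.+1]%classic) (H u - H (uN N u))%:E <=
   \int[mu]_(u in `]0%R, t 1]%classic) (H u)%:E +
   ((H (t 1) - H (t k.+1)) / N%:R)%:E)%E.
Proof.
elim: k => [_|k IH kN]; first by rewrite subrr mul0r adde0 integral_first_cell.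
have t_ge0 : 0 <= t k.+1 by rewrite divr_ge0.
have tk_le := ltW (t_lt k.+1).
have split_itv := @itv_bndbnd_setU _ _ (BRight 0) (BRight (t k.+1)) (BRight (t k.+2)).
rewrite split_itv ?bnd_simp // ge0_integral_setU //; last 3 first.
- rewrite -split_itv ?bnd_simp //.
  apply/measurable_EFinP; apply: measurable_funS (measurable_sub_uN N_gt0) => //.
  exact: (@sub_itv01 k.+2 kN).
- move=> u; rewrite -split_itv ?bnd_simp // => /(@sub_itv01 k.+2 kN) u01.
  by rewrite lee_fin sub_uN_ge0.
- rewrite disj_set2E; apply/eqP/seteqP; split=> // u [] /=.
  by rewrite !in_itv /= => /andP[_ ut] /andP[/(le_lt_trans ut)]; rewrite ltxx.
apply: le_trans (leeD (IH (ltnW kN)) (integral_cell _ kN)) _ => //.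
by rewrite -addeA -EFinD -mulrDl addrA subrK.
Qed.

End grid.

Variables (K b : R).
Hypothesis b_lt1 : b < 1.
Hypothesis H_le : {in `]0, 1], forall u, H u <= K * u `^ (- b)}.

Let z : R := 2^-1 `^ (1 - b).

Let z_gt0 : 0 < z. Proof. by rewrite powR_gt0. Qed.

Let z_lt1 : z < 1.
Proof.
have := @gt0_ltr_powR _ (1 - b); rewrite subr_gt0 => /(_ b_lt1).
by move=> /(_ 2^-1 1); rewrite powR1 !nnegrE; apply; rewrite ?invr_ge0 ?invf_lt1 ?ltr1n.
Qed.

Let K_ge0 : 0 <= K.
Proof.
have u01 : (1 : R) \in `]0, 1] by rewrite in_itv /= ltr01 lexx.
by have := le_trans (H_ge0 u01) (H_le u01); rewrite powR1 mulr1.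
Qed.

Lemma integral_dyadic_itv_le d j : 0 < d <= 1 ->
  (\int[mu]_(u in dyadic_itv d j) (H u)%:E <= (K * d `^ (1 - b) * z ^+ j.+1)%:E)%E.
Proof.
move=> /andP[d0 d1]; set x := d / 2 ^+ j.+1.
have x0 : 0 < x by rewrite divr_gt0 // exprn_gt0.
have dyadic01 u : dyadic_itv d j u -> u \in `]0, 1].
  by move=> /(dyadic_itv_sub d0); rewrite /= !in_itv /= => /andP[-> /le_trans]; apply.
apply: le_trans
  (_ : _ <= \int[mu]_(u in dyadic_itv d j) cst (K * x `^ (- b))%:E u)%E _.
  apply: ge0_le_integral_subset => // u Au; rewrite lee_fin.
  - exact/H_ge0/dyadic01.
  - by rewrite mulr_ge0 ?powR_ge0.
  - have u01 := dyadic01 _ Au; move: Au; rewrite /dyadic_itv /= in_itv /= => /andP[xu _].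
    have x01 : x \in `]0, 1].
      by move: u01; rewrite !in_itv /= x0 => /andP[_]; apply: le_trans (ltW xu).
    by apply: le_trans (H_le x01); apply: H_ni => //; exact: ltW.
rewrite integral_cst /= ?lebesgue_measure_dyadic_itv //; last exact: measurable_itv.
rewrite -/x -EFinM lee_fin.
change (K * x `^ (- b) * x <= K * d `^ (1 - b) * z ^+ j.+1).
rewrite -(mulrA K) powRN_mulr // /x -exprVn.
rewrite powRM ?exprn_ge0 ?invr_ge0 ?(ltW d0) //.
by rewrite (@powR_exprn R 2^-1 (1 - b) j.+1) ?invr_ge0 // mulrA.
Qed.

Lemma integral_itv0_le d : 0 < d <= 1 ->
  (\int[mu]_(u in `]0%R, d]%classic) (H u)%:E <= (K * d `^ (1 - b) * z / (1 - z))%:E)%E.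
Proof.
move=> /[dup] d01 /andP[d0 d1].
have sub01 : `]0, d]%classic `<=` (`]0, 1]%classic : set R).
  by move=> u; rewrite /= !in_itv /= => /andP[-> /le_trans]; apply.
have H_ge0' u : `]0, d]%classic u -> (0 <= (H u)%:E)%E.
  by move=> /sub01 u01; rewrite lee_fin H_ge0.
rewrite -(bigcup_dyadic_itv d0) ge0_integral_bigcup //; last 4 first.
- by move=> j; exact: measurable_itv.
- rewrite bigcup_dyadic_itv //; apply/measurable_EFinP.
  exact: measurable_funS (nonincreasing_measurable_itv01 H_ni).
- by rewrite bigcup_dyadic_itv.
- exact: trivIset_dyadic_itv.
apply: lime_le.
  apply: is_cvg_nneseries => j _ _; apply: integral_ge0 => u Au.
  exact/H_ge0'/(dyadic_itv_sub d0 Au).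
apply: nearW => n.
apply: le_trans (_ : _ <= (series (geometric (K * d `^ (1 - b) * z) z) n)%:E)%E _.
  rewrite /series /= -sumEFin; apply: lee_sum => j _.
  by rewrite /geometric /= -(mulrA _ z) -exprS; apply: integral_dyadic_itv_le.
rewrite lee_fin; apply: geometric_le_lim => //.
  by rewrite !mulr_ge0 ?powR_ge0 // ltW.
by rewrite ger0_norm // ltW.
Qed.

Lemma integral_sub_uN_le N : (0 < N)%N ->
  (\int[mu]_(u in `]0%R, 1%R]%classic) (H u - H (uN N u))%:E <=
   (K * (z / (1 - z) + 1) * N%:R `^ (b - 1))%:E)%E.
Proof.
move=> N_gt0; have N_gt0' : 0 < N%:R :> R by rewrite ltr0n.
set delta : R := N%:R^-1.
have delta01 : 0 < delta <= 1 by rewrite invr_gt0 N_gt0' invf_le1 ?ler1n.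
have delta_pow : delta `^ (1 - b) = N%:R `^ (b - 1).
  by rewrite /delta -powR_inv1 ?ler0n // -powRrM mulN1r opprB.
have := integral_sub_uN_telescope N_gt0 (eq_leq (prednK N_gt0)).
rewrite prednK // divff ?gt_eqF // mulr1n mul1r -/delta => /le_trans; apply.
apply: le_trans (leeD (integral_itv0_le delta01) (lexx _)) _.
rewrite -EFinD lee_fin -delta_pow.
have delta_itv : delta \in `]0, 1] by rewrite in_itv.
have last_cell : (H delta - H 1) * delta <= K * delta `^ (1 - b).
  have H1_ge0 : 0 <= H 1 by apply: H_ge0; rewrite in_itv /= ltr01 lexx.
  have delta_gt0 : 0 < delta by rewrite invr_gt0.
  apply: (@le_trans _ _ (H delta * delta)); first by rewrite ler_pM2r ?gerBl.
  by rewrite -powRN_mulr // mulrA ler_pM2r ?H_le.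
have -> : K * (z / (1 - z) + 1) * delta `^ (1 - b) =
    K * delta `^ (1 - b) * z / (1 - z) + K * delta `^ (1 - b) by ring.
by rewrite lerD2l.
Qed.

Lemma abs_integral_le_sub_uN (phi : R -> R) N : (0 < N)%N ->
  (forall u, 0 < u < 1 -> 0 <= phi u <= H u - H (uN N u)) ->
  (`| \int[mu]_(u in `]0%R, 1%R[%classic) (phi u)%:E | <=
   (K * (z / (1 - z) + 1) * N%:R `^ (- (1 - b)))%:E)%E.
Proof.
move=> N_gt0 phi_le; have phi_ge0 u : `]0, 1[%classic u -> (0 <= (phi u)%:E)%E.
  by rewrite /= in_itv /= lee_fin => /phi_le /andP[].
rewrite gee0_abs ?integral_ge0 // opprB; apply: le_trans (integral_sub_uN_le N_gt0).
apply: ge0_le_integral_subset => // [u|u|u].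
- by rewrite /= !in_itv /= => /andP[-> /ltW].
- by rewrite /= lee_fin => /sub_uN_ge0; apply.
- by rewrite /= in_itv /= lee_fin => /phi_le /andP[].
Qed.

End rounding_error.

Section Fbar_inv.
Context (R : realType) (F : R -> R).

Lemma Fbar_inv_ge0 u : 0 <= Fbar_inv F u.
Proof.
rewrite /Fbar_inv; set E := [set s | _].
have [->|/set0P[s Es]] := eqVneq E set0; first by rewrite inf0.
by apply: lb_le_inf; [exists s | move=> t []].
Qed.

Lemma Fbar_inv_le u s : 0 <= s -> 1 - F s <= u -> Fbar_inv F u <= s.
Proof. by move=> s0 Fs; apply: ge_inf; [exists 0 => t [] | split]. Qed.

Lemma le_Fbar_inv u v s : 0 <= s -> 1 - F s <= u -> u <= v ->
  Fbar_inv F v <= Fbar_inv F u.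
Proof.
move=> s0 Fs uv; apply: lb_le_inf; first by exists s.
by move=> t [t0 Ft]; apply: Fbar_inv_le => //; exact: le_trans uv.
Qed.

Variables (c tau : R).
Hypotheses (c_gt0 : 0 < c) (tau_gt1 : 1 < tau).
Hypothesis tail : forall x, 0 < x -> 1 - F x <= c * x `^ (1 - tau).

Let p := (tau - 1)^-1.

Let tail_quantile u : 0 < u -> 1 - F ((c / u) `^ p) <= u.
Proof.
move=> u0; have cu : 0 < c / u by rewrite divr_gt0.
apply: le_trans (tail (powR_gt0 _ cu)) _.
rewrite -powRrM (_ : p * (1 - tau) = -1); last first.
  by rewrite /p -[1 - tau]opprB mulrN mulVf // gt_eqF ?subr_gt0.
by rewrite powR_inv1 ?(ltW cu) // invf_div mulrC divfK // gt_eqF.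
Qed.

Lemma Fbar_inv_tail_le u : 0 < u -> Fbar_inv F u <= c `^ p * u `^ (- p).
Proof.
move=> u0; have -> : c `^ p * u `^ (- p) = (c / u) `^ p.
  by rewrite powRM ?invr_ge0 ?(ltW c_gt0) ?(ltW u0) // -powR_inv1 ?(ltW u0) // -powRrM mulN1r.
exact: Fbar_inv_le (powR_ge0 _ _) (tail_quantile u0).
Qed.

Lemma Fbar_inv_nonincreasing : {in `]0, 1] &, {homo Fbar_inv F : u v /~ u <= v}}.
Proof.
move=> u v _; rewrite in_itv /= => /andP[v0 _].
exact: le_Fbar_inv (powR_ge0 _ _) (tail_quantile v0).
Qed.

Lemma Fbar_inv_sqr_add_le u : u \in `]0, 1] ->
  Fbar_inv F u ^+ 2 + Fbar_inv F u <= ((c `^ p) ^+ 2 + c `^ p) * u `^ (- (2 * p)).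
Proof.
rewrite in_itv /= => /andP[u0 u1].
have p_ge0 : 0 <= p by rewrite invr_ge0 subr_ge0 ltW.
have w_ge1 : 1 <= u `^ (- p).
  rewrite powRN invf_ge1 ?powR_gt0 // (_ : 1 = 1 `^ p); last by rewrite powR1.
  by apply: ge0_ler_powR; rewrite ?nnegrE ?(ltW u0).
have -> : u `^ (- (2 * p)) = u `^ (- p) ^+ 2.
  by rewrite -mulrN mulrC powRrM powR_mulrn ?powR_ge0.
have := Fbar_inv_tail_le u0; have := Fbar_inv_ge0 u; have := powR_ge0 c p.
move: w_ge1; set w := u `^ (- p); set A := c `^ p; set G := Fbar_inv F u.
move=> w_ge1 A_ge0 G_ge0 G_le.
have G2_le : G ^+ 2 <= (A * w) ^+ 2 by rewrite ler_pXn2r ?nnegrE ?mulr_ge0 // (le_trans _ w_ge1).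
have Aw_le : A * w <= A * w ^+ 2 by rewrite expr2 mulrA ler_peMr ?mulr_ge0 // (le_trans _ w_ge1).
by rewrite mulrDl -exprMn lerD // (le_trans G_le).
Qed.

End Fbar_inv.

Unset Implicit Arguments. Set Strict Implicit.
Theorem lemmaB1 (R : realType) (F f : R -> R) (c tau : R) :
  (* F is a continuous distribution function *)
  {homo F : x y / x <= y} ->
  continuous F ->
  (F x @[x --> -oo] --> (0:R)) ->
  (F x @[x --> +oo] --> (1:R)) ->
  F 0 = 0 ->
  (* with density f : [0,oo) -> [0,oo) *)
  (forall x, 0 <= x -> 0 <= f x) ->
  measurable_fun (`[0, +oo[%classic : set R) f ->
  (forall x, 0 <= x ->
     (F x)%:E = (\int[@lebesgue_measure R]_(y in (`[0%R, x]%classic : set R)) (f y)%:E)%E) ->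
  (* tail bound *)
  0 < c -> 3 < tau ->
  (forall x, 0 < x -> 1 - F x <= c * x `^ (1 - tau)) ->
  (* integral condition, as y decreases to 0 *)
  (exists a, 0 < a /\ exists C d, 0 < d /\ forall y, 0 < y < d ->
     (\int[@lebesgue_measure R]_(u in (`[y, 1%R]%classic : set R))
        ((Fbar_inv F u)%:E * ((f_low f (Fbar_inv F u))%:E)^-1)
      <= (C * y `^ (- a))%:E)%E) ->
  exists alpha, 0 < alpha /\
    (exists C (N0 : nat), forall N : nat, (N0 <= N)%N ->
       (`| \int[@lebesgue_measure R]_(u in (`]0%R, 1%R[%classic : set R))
            (Fbar_inv F u * (Fbar_inv F u - Fbar_inv F (uN N u)))%:E |
        <= (C * N%:R `^ (- alpha))%:E)%E) /\
    (forall i : nat, (i = 1 \/ i = 2)%N ->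
     exists C (N0 : nat), forall N : nat, (N0 <= N)%N ->
       (`| \int[@lebesgue_measure R]_(u in (`]0%R, 1%R[%classic : set R))
            (Fbar_inv F u ^+ i - Fbar_inv F (uN N u) ^+ i)%:E |
        <= (C * N%:R `^ (- alpha))%:E)%E).
Proof.
move=> _ _ _ _ _ _ _ _ c_gt0 tau_gt3 tail _.
have tau_gt1 : 1 < tau by apply: lt_trans tau_gt3; rewrite ltr1n.
set G := Fbar_inv F; set b := 2 / (tau - 1).
have b_lt1 : b < 1 by rewrite /b ltr_pdivrMr ?subr_gt0 // mul1r; lra.
have G_ni := Fbar_inv_nonincreasing c_gt0 tau_gt1 tail.
pose H u := G u ^+ 2 + G u.
have H_ni : {in `]0, 1] &, {homo H : u v /~ u <= v}}.
  move=> u v u01 v01 vu; rewrite lerD ?G_ni // lerXn2r ?nnegrE ?Fbar_inv_ge0 ?G_ni //.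
have H_ge0 : {in `]0, 1], forall u, 0 <= H u}.
  by move=> u _; rewrite addr_ge0 ?sqr_ge0 ?Fbar_inv_ge0.
have rounding_bound :=
  abs_integral_le_sub_uN H_ni H_ge0 b_lt1 (Fbar_inv_sqr_add_le c_gt0 tau_gt1 tail).
have G_uN N u : (0 < N)%N -> 0 < u < 1 -> 0 <= G (uN N u) <= G u.
  move=> N_gt0 /andP[u0 u1]; have u01 : u \in `]0, 1] by rewrite in_itv /= u0 ltW.
  by rewrite Fbar_inv_ge0 G_ni ?uN_ge ?uN_itv01.
exists (1 - b); split; first by rewrite subr_gt0.
split; [|move=> i i12]; eexists; exists 1%N => N N_gt0;
  apply: rounding_bound => // u u01;
  have /andP[GuN_ge0 GuN_le] := G_uN N u N_gt0 u01; have := Fbar_inv_ge0 F u; rewrite /H.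
- move=> Gu_ge0; apply/andP; split; nra.
- by case: i12 => -> Gu_ge0; apply/andP; split; nra.
Qed.
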